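(* Let $k>0$, $r\ge0$, and let $V_1,\dots,V_r\le\mathbb{Z}^k$ be subgroups of infinite index. Then there exists $x\in\mathbb{Z}^k$ such that $nx\notin\bigcup_{j=1}^rV_j$ for every integer $n>0$. *)

From mathcomp Require Import all_boot all_order all_algebra.
Set Implicit Arguments. Unset Strict Implicit. Unset Printing Implicit Defensive.
Import GRing.Theory.
Local Open Scope ring_scope.

Definition is_subgroup (k : nat) (V : 'rV[int]_k -> Prop) : Prop :=
  V 0 /\ (forall x y, V x -> V y -> V (x - y)).

(* V has infinite index: the cosets x + V are not finitely many, i.e. no
   finite list of representatives covers Z^k. *)
Definition infinite_index (k : nat) (V : 'rV[int]_k -> Prop) : Prop :=
  forall s : seq 'rV[int]_k, exists x : 'rV[int]_k,
    forall y, y \in s -> ~ V (x - y).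

From Stdlib Require Import Classical.
From mathcomp Require Import all_boot all_order all_algebra.
Set Implicit Arguments. Unset Strict Implicit. Unset Printing Implicit Defensive.
Import GRing.Theory.
Local Open Scope ring_scope.

(* If every x had a positive multiple in some V_j, then Z^k would be the union
   of the saturations {x | n x \in V_j for some n > 0}.  These are subgroups,
   and they still have infinite index: if finitely many cosets of the
   saturation of V covered Z^k, two multiples of each unit vector e_i would
   fall into the same coset, so some c e_i with c > 0 would lie in V, and V
   would contain M Z^k for some M > 0.  But by B. H. Neumann's lemma no group
   is a finite union of cosets of subgroups of infinite index. *)

Definition saturation (G : zmodType) (V : G -> Prop) (x : G) : Prop :=
  exists2 n, (0 < n)%N & V (x *+ n).

Section Subgroup.
Variables (G : zmodType) (V : G -> Prop).
Hypotheses (V0 : V 0) (VB : forall x y, V x -> V y -> V (x - y)).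

Lemma subgroupN x : V x -> V (- x).
Proof. by move=> Vx; rewrite -sub0r; apply: VB. Qed.

Lemma subgroupD x y : V x -> V y -> V (x + y).
Proof. by move=> Vx Vy; rewrite -[y]opprK; apply/VB/subgroupN. Qed.

Lemma subgroupMn x n : V x -> V (x *+ n).
Proof.
by move=> Vx; elim: n => [|n IHn]; rewrite ?mulr0n // mulrS; apply: subgroupD.
Qed.

Lemma subgroupMz x (z : int) : V x -> V (x *~ z).
Proof.
move=> Vx; case: z => n; rewrite ?NegzE ?mulrNz; [|apply: subgroupN];
  by rewrite -pmulrn; apply: subgroupMn.
Qed.

Lemma subgroup_sum (I : Type) (r : seq I) (F : I -> G) :
  (forall i, V (F i)) -> V (\sum_(i <- r) F i).
Proof. by move=> VF; apply: (big_ind V) => //; apply: subgroupD. Qed.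

Lemma subgroup_common_multiple (I : finType) (f : I -> G) :
  (forall i, exists2 c, (0 < c)%N & V (f i *+ c)) ->
  exists2 M, (0 < M)%N & forall i, V (f i *+ M).
Proof.
move=> Vf; suff [M M_gt0 VM] : exists2 M, (0 < M)%N &
    forall i, i \in enum I -> V (f i *+ M).
  by exists M => // i; apply: VM; rewrite mem_enum.
elim: (enum I) => [|i l [M M_gt0 VM]]; first by exists 1%N.
have [c c_gt0 Vc] := Vf i; exists (M * c)%N; first by rewrite muln_gt0 M_gt0.
move=> j; rewrite in_cons => /predU1P[->|/VM VMj].
  by rewrite mulnC mulrnA; apply: subgroupMn.
by rewrite mulrnA; apply: subgroupMn.
Qed.

Lemma saturationB x y : saturation V x -> saturation V y -> saturation V (x - y).
Proof.
move=> [n n_gt0 Vx] [m m_gt0 Vy]; exists (n * m)%N; first by rewrite muln_gt0 n_gt0.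
rewrite mulrnBl {2}mulnC !mulrnA.
by apply: VB; apply: subgroupMn.
Qed.

End Subgroup.

Lemma twice_or_eventually_not (P : nat -> Prop) :
  (exists n1 n2, (n1 < n2)%N /\ P n1 /\ P n2) \/ exists N, forall n, (N <= n)%N -> ~ P n.
Proof.
case: (classic (exists n1, P n1)) => [[n1 Pn1]|noP]; last first.
  by right; exists 0%N => n _ Pn; apply: noP; exists n.
case: (classic (exists2 n2, (n1 < n2)%N & P n2)) => [[n2 lt12 Pn2]|noP2].
  by left; exists n1, n2.
by right; exists n1.+1 => n lt1n Pn; apply: noP2; exists n.
Qed.

(* Pigeonhole: two multiples of [e] fall into the same coset. *)
Lemma multiple_of_coset_cover (G : zmodType) (S : G -> Prop)
    (SB : forall x y, S x -> S y -> S (x - y)) (e : G) (s : seq G) (N : nat) :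
  (forall n, (N <= n)%N -> exists2 y, y \in s & S (e *+ n - y)) ->
  exists2 d, (0 < d)%N & S (e *+ d).
Proof.
elim: s N => [|y0 s IHs] N cover; first by have [] := cover N (leqnn N).
pose P n := (N <= n)%N /\ S (e *+ n - y0).
case: (twice_or_eventually_not P) => [[n1 [n2 [lt12 [[_ S1] [_ S2]]]]]|[N' notP]].
  exists (n2 - n1)%N; first by rewrite subn_gt0.
  have := SB _ _ S2 S1.
  by rewrite opprB addrA subrK -mulrnBr // ltnW.
apply: (IHs (maxn N N')) => n; rewrite geq_max => /andP[leNn leN'n].
have [y] := cover n leNn; rewrite in_cons => /predU1P[->{y} Sn|]; last by exists y.
by exfalso; apply: (notP n leN'n).
Qed.

Section Lattice.
Variable k : nat.
Implicit Types (V : 'rV[int]_k -> Prop).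

(* The rows with entries in [0, M) represent the cosets of M Z^k. *)
Lemma finite_index_of_multiples V (M : nat) : is_subgroup V -> (0 < M)%N ->
  (forall i, V ('e_i *+ M)) -> ~ infinite_index V.
Proof.
move=> [V0 VB] M_gt0 VM /(_ [seq map_mx (fun a : 'I_M => a%:Z) f | f : 'rV['I_M]_k]).
have M_neq0 : M%:Z != 0 by rewrite eqz_nat -lt0n.
case=> x avoid.
have rem_lt j : (`|(x ord0 j %% M%:Z)%Z| < M)%N.
  by rewrite -ltz_nat gez0_abs ?modz_ge0 // ltz_pmod.
pose xmod := map_mx (fun a : 'I_M => a%:Z) (\row_j Ordinal (rem_lt j)).
apply: (avoid xmod).
  by apply: map_f; rewrite mem_enum.
rewrite [_ - _]row_sum_delta; apply: subgroup_sum => // j.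
have -> : (x - xmod) ord0 j = (x ord0 j %/ M%:Z)%Z * M%:Z.
  rewrite !mxE gez0_abs ?modz_ge0 // {1}(divz_eq (x ord0 j) M%:Z).
  by rewrite addrK.
rewrite -scalerA -natz scaler_nat -[X in X *: _]intz scaler_int.
by apply: subgroupMz.
Qed.

Lemma saturation_infinite_index V :
  is_subgroup V -> infinite_index V -> infinite_index (saturation V).
Proof.
move=> subV infV s; apply: NNPP => not_avoid; have [V0 VB] := subV.
have cover x : exists2 y, y \in s & saturation V (x - y).
  apply: NNPP => not_cover; apply: not_avoid; exists x => y ys sat_xy.
  by apply: not_cover; exists y.
have Ve i : exists2 c, (0 < c)%N & V ('e_i *+ c).
  have [d d_gt0 [n n_gt0 Vdn]] :=
    multiple_of_coset_cover (saturationB V0 VB) (fun n _ => cover ('e_i *+ n)) (N := 0).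
  by exists (d * n)%N; rewrite ?muln_gt0 ?d_gt0 // mulrnA.
have [M M_gt0 VM] := subgroup_common_multiple V0 VB Ve.
exact: finite_index_of_multiples subV M_gt0 VM infV.
Qed.

End Lattice.

Section CosetCover.
Variables (I : eqType) (G : zmodType) (H : I -> G -> Prop).
Hypothesis HB : forall j x y, H j x -> H j y -> H j (x - y).
Hypothesis H_infinite_index :
  forall j (s : seq G), exists x, forall y, y \in s -> ~ H j (x - y).

(* A pair [p] in [s] stands for the coset [p.2 + H p.1]. *)
Definition avoids (s : seq (I * G)) (z : G) : Prop :=
  forall p, p \in s -> ~ H p.1 (z - p.2).

(* Pick a coset [x + H_j] missed by all the H_j-cosets of [s].  If [s] covered
   G, the other cosets would cover [x + H_j], and their translates by [a - x]
   would cover each coset [a + H_j]. *)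
Lemma cosets_drop_subgroup (j : I) (s : seq (I * G)) :
  exists2 s' : seq (I * G),
      {subset [seq q.1 | q <- s'] <= [seq q.1 | q <- s & q.1 != j]}
    & forall z', avoids s' z' -> exists z, avoids s z.
Proof.
pose sj := [seq p <- s | p.1 == j]; pose so := [seq p <- s | p.1 != j].
have [x x_avoid] := H_infinite_index j [seq p.2 | p <- sj].
exists ([seq (q.1, p.2 - x + q.2) | p <- sj, q <- so] ++ so).
  move=> _ /mapP[q' + ->]; rewrite mem_cat => /orP[/allpairsP[[p q] [_ qo ->]]|qo];
  exact: (map_f fst qo).
move=> z' z'_avoid.
case: (classic (exists2 p, p \in s & H p.1 (z' - p.2))) => [[p ps Hp]|]; last first.
  by move=> no; exists z' => p ps Hp; apply: no; exists p.
have pj : p.1 = j.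
  case: (eqVneq p.1 j) => // pj; exfalso; apply: (z'_avoid p) Hp.
  by rewrite mem_cat mem_filter pj ps orbT.
exists (z' - p.2 + x) => q qs Hq; case: (eqVneq q.1 j) => qj.
  apply: (x_avoid q.2); first by apply: map_f; rewrite mem_filter qj eqxx.
  rewrite qj in Hq; rewrite pj in Hp; have := HB Hq Hp.
  by rewrite addrAC [_ + x]addrC addrK.
apply: (z'_avoid (q.1, p.2 - x + q.2)).
  rewrite mem_cat; apply/orP; left.
  by apply: (allpairs_f (fun p q => (q.1, p.2 - x + q.2))); rewrite mem_filter ?pj ?qj ?eqxx.
by rewrite /= opprD opprB !addrA [z' + x - _]addrAC.
Qed.

Lemma avoid_finite_cosets (s : seq (I * G)) : exists z, avoids s z.
Proof.
suff avoid : forall A : seq I, all (fun p => p.1 \in A) s -> exists z, avoids s z.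
  by apply: (avoid [seq p.1 | p <- s]); apply/allP => p ps; apply: map_f.
move=> A; elim: A s => [|j A IHA] s sA.
  by case: s sA => [|p s] //= _; exists 0.
have [s' s'_idx lift] := cosets_drop_subgroup j s.
have [z' z'_avoid] : exists z', avoids s' z'.
  apply: IHA; apply/allP => q' q's'.
  have /mapP[q] := s'_idx _ (map_f fst q's'); rewrite mem_filter => /andP[qj qs] ->.
  by have := allP sA q qs; rewrite in_cons (negbTE qj).
exact: lift z'_avoid.
Qed.

End CosetCover.

Theorem lemma4p8 (k : nat) (hk : (0 < k)%N) (r : nat)
    (V : 'I_r -> 'rV[int]_k -> Prop)
    (hsub : forall j, is_subgroup (V j))
    (hinf : forall j, infinite_index (V j)) :
  exists x : 'rV[int]_k, forall (n : nat), (0 < n)%N -> forall j : 'I_r, ~ V j (x *+ n).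
Proof.
have [z z_avoid] := avoid_finite_cosets
  (fun j => saturationB (hsub j).1 (hsub j).2)
  (fun j => saturation_infinite_index (hsub j) (hinf j))
  [seq (j, 0) | j <- enum 'I_r].
exists z => n n_gt0 j Vzn; apply: (z_avoid (j, 0)); first by rewrite map_f ?mem_enum.
by rewrite subr0; exists n.
Qed.
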